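(* Let $A$ be a commutative noetherian local ring and let $x,y\in A$ be a regular exact pair of zero divisors. Let $a,b\in A$ be such that $a$ or $b$ is weakly regular on the $A$-module $A/(x,y)$. Then there are $A$-module isomorphisms (a) $\operatorname{Hom}_A(H_a,G_b)\cong\operatorname{Hom}_A(H_b,G_a)\cong G_{ab}$, and (b) $\operatorname{Hom}_A(G_a,H_b)\cong\operatorname{Hom}_A(G_b,H_a)\cong H_{ab}$.
   Context: Two non-units $x,y\in A$ form an exact pair of zero divisors if $\operatorname{Ann}_A(x)=(y)$ and $\operatorname{Ann}_A(y)=(x)$; such a pair is regular if $(x)\cap(y)=0$. An element $a\in A$ is weakly regular on a module $M$ if multiplication by $a$ on $M$ is injective. For $a\in A$, let $\gamma_a=\begin{pmatrix} x & a\\ 0 & y\end{pmatrix}$ and $\eta_a=\begin{pmatrix} y & -a\\ 0 & x\end{pmatrix}$, viewed as $A$-linear maps $A^2\to A^2$ acting on column vectors, and set $G_a=\operatorname{Coker}\gamma_a$, $H_a=\operatorname{Coker}\eta_a$. *)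

From HB Require Import structures.
From mathcomp Require Import all_boot all_order all_algebra.
Set Implicit Arguments. Unset Strict Implicit. Unset Printing Implicit Defensive.
Import GRing.Theory.
Local Open Scope ring_scope.

Section Defs.
Variable A : comUnitRingType.

Definition is_ideal (I : A -> Prop) : Prop :=
  [/\ I 0, (forall u v, I u -> I v -> I (u + v)) & (forall r u, I u -> I (r * u))].

Definition fin_gen (I : A -> Prop) : Prop :=
  exists n (g : 'I_n -> A),
    forall u, I u <-> exists c : 'I_n -> A, u = \sum_(i < n) c i * g i.

Definition noetherian : Prop := forall I, is_ideal I -> fin_gen I.

Definition maximal_ideal (M : A -> Prop) : Prop :=
  [/\ is_ideal M, ~ M 1 &
      forall J, is_ideal J -> (forall u, M u -> J u) ->
        (forall u, J u <-> M u) \/ J 1].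

Definition local_ring : Prop :=
  exists M, maximal_ideal M /\
    forall M', maximal_ideal M' -> forall u, M' u <-> M u.

Definition pideal (z : A) (u : A) : Prop := exists s, u = s * z.
Definition ann (z : A) (u : A) : Prop := u * z = 0.

Definition exact_pair (x y : A) : Prop :=
  [/\ x \isn't a GRing.unit, y \isn't a GRing.unit,
      (forall u, ann x u <-> pideal y u) & (forall u, ann y u <-> pideal x u)].

Definition regular_exact_pair (x y : A) : Prop :=
  exact_pair x y /\ (forall u, pideal x u -> pideal y u -> u = 0).

Definition weakly_regular (M : lmodType A) (a : A) : Prop :=
  injective (fun m : M => a *: m).

Definition is_coker (U V W : lmodType A) (f : U -> V) (p : {linear V -> W}) : Prop :=
  (forall w, exists v, p v = w) /\ (forall v, p v = 0 <-> exists u, v = f u).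

Definition mx22 (p q r s : A) : 'M[A]_2 :=
  \matrix_(i < 2, j < 2)
    if i == 0 :> nat then (if j == 0 :> nat then p else q)
    else (if j == 0 :> nat then r else s).

Definition gamma_mx (x y a : A) : 'M[A]_2 := mx22 x a 0 y.
Definition eta_mx (x y a : A) : 'M[A]_2 := mx22 y (- a) 0 x.

(* the map A^2 -> A, (s,t) |-> s x + t y, whose cokernel is A/(x,y) *)
Definition gen2 (x y : A) (v : 'cV[A]_2) : A^o := v 0 0 * x + v 1 0 * y.

(* Hom_A(H, G) ≅ N as A-modules, where Hom_A(H,G) carries the pointwise
   A-module structure on A-linear maps H -> G *)
Definition hom_iso (H G N : lmodType A) : Prop :=
  exists Phi : {linear H -> G} -> N,
    [/\ bijective Phi,
        (forall f g h : {linear H -> G},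
            (forall z, h z = f z + g z) -> Phi h = Phi f + Phi g) &
        (forall (r : A) (f h : {linear H -> G}),
            (forall z, h z = r *: f z) -> Phi h = r *: Phi f)].

End Defs.

From HB Require Import structures.
From mathcomp Require Import all_boot all_order all_algebra.
From mathcomp Require Import ring.
From Stdlib Require Import FunctionalExtensionality ProofIrrelevance ClassicalEpsilon.
Set Implicit Arguments. Unset Strict Implicit. Unset Printing Implicit Defensive.
Local Open Scope ring_scope.
Import GRing.Theory.

(* Let H and G be the cokernels of the triangular matrices (y c; 0 x) and
   (x d; 0 y), with standard generators h1, h2 and f1, f2.  A map H -> G is
   given by the images g1, g2 of h1, h2, subject to y g1 = 0 and
   c g1 + x g2 = 0.  Using Ann(x) = (y), Ann(y) = (x), (x) ∩ (y) = 0 and the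
   regularity of c or d modulo (x, y), these pairs are exactly
   (s β x f2, α f1 - s β c f2), and such a pair vanishes iff (α, β) lies in the
   image of (x e; 0 y), where e = - s c d and s = ±1.  So Hom(H, G) is the
   cokernel of (x e; 0 y).  The isomorphisms of the theorem are the instances
   (c, d) = (-a, b), (-b, a), and, after exchanging x and y with s = -1,
   (a, -b), (b, -a). *)

Section Cokernels.
Variable A : comUnitRingType.

Lemma linear_ext (U V : lmodType A) (f g : {linear U -> V}) : f =1 g -> f = g.
Proof.
case: f g => [f [[fa] [fs]]] [g [[ga] [gs]]] /= /functional_extensionality fg.
by subst g; rewrite (proof_irrelevance _ fa ga) (proof_irrelevance _ fs gs).
Qed.

Lemma coker_lift (U V W M : lmodType A) (f : U -> V) (p : {linear V -> W})
    (g : {linear V -> M}) :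
  is_coker f p -> (forall u, g (f u) = 0) ->
  exists F : {linear W -> M}, forall v, F (p v) = g v.
Proof.
move=> [p_surj p_ker] g_f.
have g_eq v v' : p v = p v' -> g v = g v'.
  move=> /eqP; rewrite -subr_eq0 -linearB => /eqP /p_ker [u Eu].
  by apply/eqP; rewrite -subr_eq0 -linearB Eu g_f.
have [sec secK] := ClassicalEpsilon.choice _ p_surj.
pose F w := g (sec w).
have FpE v : F (p v) = g v by apply: g_eq; rewrite secK.
have F_lin : linear F.
  by move=> r w w'; rewrite -[in LHS](secK w) -[in LHS](secK w') -linearP FpE linearP.
pose Fl : {linear W -> M} := HB.pack F (GRing.isLinear.Build _ _ _ _ F F_lin).
by exists Fl.
Qed.

Lemma hom_iso_transport (H G N V P : lmodType A) (pN : {linear V -> N})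
    (theta : {linear V -> P}) (ev : {linear H -> G} -> P) :
  (forall n, exists v, pN v = n) -> (forall v, pN v = 0 <-> theta v = 0) ->
  injective ev -> (forall f, exists v, ev f = theta v) ->
  (forall v, exists f, ev f = theta v) ->
  (forall f g h : {linear H -> G}, (forall z, h z = f z + g z) -> ev h = ev f + ev g) ->
  (forall r (f h : {linear H -> G}), (forall z, h z = r *: f z) -> ev h = r *: ev f) ->
  hom_iso H G N.
Proof.
move=> pN_surj ker_eq ev_inj ev_theta theta_ev ev_add ev_scale.
have pN_theta v v' : pN v = pN v' <-> theta v = theta v'.
  by split=> /eqP; rewrite -subr_eq0 -linearB => /eqP /ker_eq E;
    apply/eqP; rewrite -subr_eq0 -linearB E.
have [phi phiP] := ClassicalEpsilon.choice _ ev_theta.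
have [sec secP] := ClassicalEpsilon.choice _ pN_surj.
have [psi psiP] := ClassicalEpsilon.choice _ theta_ev.
exists (fun f => pN (phi f)); split.
- exists (fun n => psi (sec n)) => [f | n].
    by apply: ev_inj; rewrite psiP phiP; apply/pN_theta; rewrite secP.
  by rewrite -[RHS]secP; apply/pN_theta; rewrite -phiP psiP.
- by move=> f g h Hh; rewrite -linearD; apply/pN_theta; rewrite linearD -!phiP; apply: ev_add.
- by move=> r f h Hh; rewrite -linearZ; apply/pN_theta; rewrite linearZ -!phiP; apply: ev_scale.
Qed.

Definition cv2 (u v : A) : 'cV[A]_2 :=
  \col_(i < 2) (if i == 0 :> nat then u else v).

Lemma cv2E (w : 'cV[A]_2) : w = cv2 (w 0 0) (w 1 0).
Proof.
apply/matrixP=> i j; rewrite !mxE (ord1 j).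
by case: i => [[|[|i]] Hi] //=; congr (w _ _); apply: val_inj.
Qed.

Lemma mul_mx22_cv2 (p q r t u v : A) :
  mx22 p q r t *m cv2 u v = cv2 (p * u + q * v) (r * u + t * v).
Proof.
apply/matrixP=> i j; rewrite !mxE big_ord_recl big_ord1 !mxE /=.
by case: i => [[|[|i]] Hi].
Qed.

Lemma linear_cv2 (M : lmodType A) (pM : {linear 'cV[A]_2 -> M}) (u v : A) :
  pM (cv2 u v) = u *: pM (cv2 1 0) + v *: pM (cv2 0 1).
Proof.
rewrite -!linearZ -linearD; congr (pM _).
by apply/matrixP=> i j; rewrite !mxE; case: ifP; rewrite ?mulr1 ?mulr0 ?addr0 ?add0r.
Qed.

Definition comb2 {M : lmodType A} (g1 g2 : M) (w : 'cV[A]_2) : M :=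
  w 0 0 *: g1 + w 1 0 *: g2.

Fact comb2_is_linear (M : lmodType A) (g1 g2 : M) : linear (comb2 g1 g2).
Proof.
move=> r w w'; rewrite /comb2 !mxE !scalerDl -!scalerA scalerDr.
by rewrite -!addrA; congr (_ + _); rewrite addrCA.
Qed.

HB.instance Definition _ (M : lmodType A) (g1 g2 : M) :=
  GRing.isLinear.Build A 'cV[A]_2 M _ (comb2 g1 g2) (@comb2_is_linear M g1 g2).

Lemma comb2_cv2 (M : lmodType A) (g1 g2 : M) (u v : A) :
  comb2 g1 g2 (cv2 u v) = u *: g1 + v *: g2.
Proof. by rewrite /comb2 !mxE. Qed.

Section TriangularCokernel.
Variables (M : lmodType A) (p q t : A) (pM : {linear 'cV[A]_2 -> M}).
Hypothesis cM : is_coker (mulmx (mx22 p q 0 t)) pM.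
Local Notation e1 := (pM (cv2 1 0)).
Local Notation e2 := (pM (cv2 0 1)).

Lemma tri_coker_gen (g : M) : exists u v, g = u *: e1 + v *: e2.
Proof.
by have [w <-] := cM.1 g; exists (w 0 0), (w 1 0); rewrite -linear_cv2 -cv2E.
Qed.

Lemma tri_coker_comb_eq0 (u v : A) :
  u *: e1 + v *: e2 = 0 <-> exists k l, u = p * k + q * l /\ v = t * l.
Proof.
rewrite -linear_cv2 cM.2; split=> [[w] | [k [l [-> ->]]]].
  rewrite [w]cv2E mul_mx22_cv2 mul0r add0r => /matrixP E.
  by exists (w 0 0), (w 1 0); move: (E 0 0) (E 1 0); rewrite !mxE /= => -> ->.
by exists (cv2 k l); rewrite mul_mx22_cv2 mul0r add0r.
Qed.

Lemma tri_coker_rel1 : p *: e1 = 0.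
Proof.
have := (tri_coker_comb_eq0 p 0).2; rewrite scale0r addr0; apply.
by exists 1, 0; rewrite mulr1 !mulr0 addr0.
Qed.

Lemma tri_coker_rel2 : q *: e1 + t *: e2 = 0.
Proof.
by apply/tri_coker_comb_eq0; exists 0, 1; rewrite !mulr1 mulr0 add0r.
Qed.

Lemma tri_coker_hom_ext (W : lmodType A) (f f' : {linear M -> W}) :
  f e1 = f' e1 -> f e2 = f' e2 -> f = f'.
Proof.
move=> E1 E2; apply: linear_ext => g; have [u [v ->]] := tri_coker_gen g.
by rewrite !linearD !linearZ /= E1 E2.
Qed.

Lemma tri_coker_hom (W : lmodType A) (g1 g2 : W) :
  p *: g1 = 0 -> q *: g1 + t *: g2 = 0 ->
  exists f : {linear M -> W}, f e1 = g1 /\ f e2 = g2.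
Proof.
move=> rel1 rel2.
have [|F FpE] := @coker_lift _ _ _ _ _ _ (comb2 g1 g2) cM.
  move=> w; rewrite [w]cv2E mul_mx22_cv2 /= comb2_cv2 mul0r add0r scalerDl.
  rewrite (mulrC p) (mulrC q) (mulrC t) -!scalerA -addrA -scalerDr.
  by rewrite rel1 rel2 !scaler0 addr0.
by exists F; rewrite !FpE /= !comb2_cv2 !scale1r !scale0r addr0 add0r.
Qed.

End TriangularCokernel.

Lemma regular_exact_pair_sym (x y : A) :
  regular_exact_pair x y -> regular_exact_pair y x.
Proof. by move=> [[nx ny ax ay] cap]; split=> [|u ? ?]; [split | apply: cap]. Qed.

Section RegularExactPair.
Variables x y : A.
Hypothesis xy : regular_exact_pair x y.

Lemma pair_mulxy : x * y = 0.
Proof. by case: xy => [[_ _ _ ann_y] _]; apply/ann_y; exists 1; rewrite mul1r. Qed.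

Lemma pair_ann_x (u : A) : u * x = 0 -> pideal y u.
Proof. by case: xy => [[_ _ ann_x _] _] /ann_x. Qed.

Lemma pair_ann_y (u : A) : u * y = 0 -> pideal x u.
Proof. by case: xy => [[_ _ _ ann_y] _] /ann_y. Qed.

Lemma pair_cross (a b : A) : a * x = b * y -> pideal y a /\ pideal x b.
Proof.
move=> E; have ax0 : a * x = 0 by case: xy => _; apply; [exists a | exists b].
by split; [apply: pair_ann_x | apply: pair_ann_y; rewrite -E].
Qed.

End RegularExactPair.

Definition in_ideal2 (x y r : A) : Prop := exists p q, r = p * x + q * y.

(* [a] is weakly regular on A/(x, y) *)
Definition regular_mod2 (x y a : A) : Prop :=
  forall r, in_ideal2 x y (a * r) -> in_ideal2 x y r.

Lemma in_ideal2C (x y r : A) : in_ideal2 x y r -> in_ideal2 y x r.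
Proof. by move=> [p [q ->]]; exists q, p; rewrite addrC. Qed.

Lemma regular_mod2C (x y a : A) : regular_mod2 x y a -> regular_mod2 y x a.
Proof. by move=> reg r /in_ideal2C /reg /in_ideal2C. Qed.

Lemma regular_mod2N (x y a : A) : regular_mod2 x y a -> regular_mod2 x y (- a).
Proof.
move=> reg r [p [q E]]; apply: reg; exists (- p), (- q).
by rewrite -[a * r]opprK -mulNr E; ring.
Qed.

Lemma weakly_regular_mod2 (x y a : A) (Q : lmodType A) (pQ : {linear A^o -> Q}) :
  is_coker (gen2 x y) pQ -> weakly_regular Q a -> regular_mod2 x y a.
Proof.
move=> [_ pQ_ker] a_reg r [p [q Ear]].
have /pQ_ker [w ->] : pQ r = 0.
  apply: a_reg; rewrite /= scaler0 -linearZ; apply/pQ_ker.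
  by exists (cv2 p q); rewrite /gen2 !mxE.
by exists (w 0 0), (w 1 0).
Qed.

Section HomCokernel.
Variables (x y c d e s : A) (H G N : lmodType A).
Variables (pH : {linear 'cV[A]_2 -> H}) (pG : {linear 'cV[A]_2 -> G}).
Variable pN : {linear 'cV[A]_2 -> N}.
Hypotheses (xy : regular_exact_pair x y) (ss : s * s = 1) (def_e : e = - (s * c * d)).
Hypothesis reg_cd : regular_mod2 x y c \/ regular_mod2 x y d.
Hypotheses (cH : is_coker (mulmx (mx22 y c 0 x)) pH)
  (cG : is_coker (mulmx (mx22 x d 0 y)) pG) (cN : is_coker (mulmx (mx22 x e 0 y)) pN).
Local Notation h1 := (pH (cv2 1 0)).
Local Notation h2 := (pH (cv2 0 1)).
Local Notation f1 := (pG (cv2 1 0)).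
Local Notation f2 := (pG (cv2 0 1)).

Lemma G_ann_x (g : G) : x *: g = 0 -> exists al, g = al *: f1.
Proof.
have [u [v ->]] := tri_coker_gen cG g.
rewrite scalerDr !scalerA => /(tri_coker_comb_eq0 cG) [_ [l [_ Exv]]].
have vxly : v * x = l * y by rewrite mulrC Exv mulrC.
have [[m ->] _] := pair_cross xy vxly.
have yf2 : y *: f2 = - (d *: f1).
  by apply/eqP; rewrite -addr_eq0 addrC (tri_coker_rel2 cG).
by exists (u - m * d); rewrite -scalerA yf2 scalerN scalerA scalerBl.
Qed.

Lemma hom_image_h1 (g g' : G) :
  y *: g = 0 -> c *: g + x *: g' = 0 -> exists p, g = (p * x) *: f2.
Proof.
have [u [v ->]] := tri_coker_gen cG g; have [u' [v' ->]] := tri_coker_gen cG g'.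
rewrite scalerDr !scalerA => /(tri_coker_comb_eq0 cG) [k [l [Eyu Eyv]]] cg.
have [k' Evl] : pideal x (v - l).
  by apply: (pair_ann_y xy); rewrite mulrBl (mulrC v) Eyv mulrC subrr.
have El : l = v - k' * x by rewrite -Evl; ring.
have [p [q Ev]] : in_ideal2 x y v.
  case: reg_cd => reg; apply: reg.
    move: cg; rewrite !scalerDr !scalerA addrACA -!scalerDl.
    move=> /(tri_coker_comb_eq0 cG) [_ [l' [_ E]]].
    by exists (- v'), l'; rewrite -[c * v](addrK (x * v')) E; ring.
  exists (d * k' - k), u.
  by rewrite (mulrC u) Eyu El; ring.
have cross : (k + d * p - d * k') * x = (u - d * q) * y.
  have -> : (u - d * q) * y = y * u - d * q * y by ring.
  by rewrite Eyu El Ev; ring.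
have [_ [m Em]] := pair_cross xy cross.
exists p; apply/eqP; rewrite -subr_eq0 -addrA -scalerBl; apply/eqP/(tri_coker_comb_eq0 cG).
exists m, q; split; last by rewrite Ev; ring.
by rewrite -[u](subrK (d * q)) Em; ring.
Qed.

Local Notation theta := (comb2 ((0, f1) : G * G) ((s * x) *: f2, - ((s * c) *: f2))).

Definition hom_eval (f : {linear H -> G}) : G * G := (f h1, f h2).

Lemma theta_cv2 (al be : A) :
  theta (cv2 al be) = ((be * s * x) *: f2, al *: f1 - (be * s * c) *: f2).
Proof.
rewrite /= comb2_cv2; congr pair => /=.
  by rewrite scaler0 add0r scalerA mulrA.
by rewrite scalerN scalerA mulrA.
Qed.

Lemma pN_eq0_theta (w : 'cV[A]_2) : pN w = 0 <-> theta w = 0.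
Proof.
rewrite [w]cv2E theta_cv2 linear_cv2 (tri_coker_comb_eq0 cN).
move: (w 0 0) (w 1 0) => al be; split=> [[k [l [-> ->]]] | [E1 E2]].
  congr pair.
    have -> : y * l * s * x = x * y * (l * s) by ring.
    by rewrite (pair_mulxy xy) mul0r scale0r.
  rewrite -scaleNr; apply/(tri_coker_comb_eq0 cG).
  by exists k, (- (l * s * c)); split; rewrite ?def_e; ring.
have [_ [l [_ Ebx]]] : exists k l, 0 = x * k + d * l /\ be * s * x = y * l.
  by apply/(tri_coker_comb_eq0 cG); rewrite scale0r add0r.
have bsx : be * s * x = l * y by rewrite Ebx mulrC.
have [[k1 Ebs] _] := pair_cross xy bsx.
move: E2; rewrite -scaleNr => /(tri_coker_comb_eq0 cG) [k3 [l3 [Eal Ec]]].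
have [m Em] : pideal x (l3 + k1 * c).
  by apply: (pair_ann_y xy); rewrite mulrDl (mulrC l3) -Ec Ebs; ring.
exists (k3 + d * m), (s * k1); split.
  have El3 : l3 = m * x - k1 * c by rewrite -Em; ring.
  have -> : e * (s * k1) = - (s * s) * c * d * k1 by rewrite def_e; ring.
  by rewrite Eal El3 ss; ring.
by rewrite -[be]mulr1 -ss mulrA Ebs; ring.
Qed.

Lemma hom_eval_inj : injective hom_eval.
Proof. by move=> f f' [E1 E2]; apply: (tri_coker_hom_ext cH). Qed.

Lemma hom_eval_theta (f : {linear H -> G}) : exists w, hom_eval f = theta w.
Proof.
have yg : y *: f h1 = 0 by rewrite -linearZ (tri_coker_rel1 cH) linear0.
have cg : c *: f h1 + x *: f h2 = 0.
  by rewrite -linearZ -[x *: _]linearZ -linearD (tri_coker_rel2 cH) linear0.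
have [p Eg] := hom_image_h1 yg cg.
have [al Eal] : exists al, f h2 + (c * p) *: f2 = al *: f1.
  apply: G_ann_x; rewrite scalerDr scalerA (_ : x * (c * p) = c * (p * x)); last by ring.
  by rewrite -scalerA -Eg addrC.
exists (cv2 al (s * p)); rewrite theta_cv2 /hom_eval; congr pair.
  have -> : s * p * s * x = s * s * (p * x) by ring.
  by rewrite Eg ss mul1r.
have -> : s * p * s * c = s * s * (c * p) by ring.
by rewrite ss mul1r -Eal addrK.
Qed.

Lemma theta_hom_eval (w : 'cV[A]_2) : exists f, hom_eval f = theta w.
Proof.
rewrite [w]cv2E theta_cv2; move: (w 0 0) (w 1 0) => al be.
have rel1 : y *: ((be * s * x) *: f2) = 0.
  rewrite scalerA; have -> : y * (be * s * x) = x * y * (be * s) by ring.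
  by rewrite (pair_mulxy xy) mul0r scale0r.
have rel2 : c *: ((be * s * x) *: f2) + x *: (al *: f1 - (be * s * c) *: f2) = 0.
  rewrite scalerBr !scalerA (mulrC x al) -(scalerA al) (tri_coker_rel1 cG) scaler0 sub0r.
  have -> : x * (be * s * c) = c * (be * s * x) by ring.
  exact: subrr.
have [f [F1 F2]] := tri_coker_hom cH rel1 rel2.
by exists f; rewrite /hom_eval F1 F2.
Qed.

Lemma hom_coker_iso : hom_iso H G N.
Proof.
apply: (@hom_iso_transport H G N _ _ pN theta hom_eval cN.1 pN_eq0_theta
  hom_eval_inj hom_eval_theta theta_hom_eval).
  by move=> f g h Hh; rewrite /hom_eval !Hh.
by move=> r f h Hh; rewrite /hom_eval !Hh.
Qed.

End HomCokernel.

End Cokernels.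

Theorem theorem7p5 (A : comUnitRingType) (x y a b : A)
  (Q Ga Gb Gab Ha Hb Hab : lmodType A)
  (pQ : {linear A^o -> Q})
  (pGa : {linear 'cV[A]_2 -> Ga}) (pGb : {linear 'cV[A]_2 -> Gb})
  (pGab : {linear 'cV[A]_2 -> Gab})
  (pHa : {linear 'cV[A]_2 -> Ha}) (pHb : {linear 'cV[A]_2 -> Hb})
  (pHab : {linear 'cV[A]_2 -> Hab}) :
  noetherian A -> local_ring A -> regular_exact_pair x y ->
  is_coker (gen2 x y) pQ ->
  is_coker (mulmx (gamma_mx x y a)) pGa -> is_coker (mulmx (gamma_mx x y b)) pGb ->
  is_coker (mulmx (gamma_mx x y (a * b))) pGab ->
  is_coker (mulmx (eta_mx x y a)) pHa -> is_coker (mulmx (eta_mx x y b)) pHb ->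
  is_coker (mulmx (eta_mx x y (a * b))) pHab ->
  weakly_regular Q a \/ weakly_regular Q b ->
  (hom_iso Ha Gb Gab /\ hom_iso Hb Ga Gab) /\
  (hom_iso Ga Hb Hab /\ hom_iso Gb Ha Hab).
Proof.
move=> _ _ xy cQ cGa cGb cGab cHa cHb cHab reg_Q.
have yx := regular_exact_pair_sym xy.
have reg_ab : regular_mod2 x y a \/ regular_mod2 x y b.
  by case: reg_Q => /(weakly_regular_mod2 cQ); [left | right].
have s1 : (1 : A) * 1 = 1 by rewrite mulr1.
have sN1 : (-1 : A) * -1 = 1 by rewrite mulrNN mulr1.
split; split.
- apply: (hom_coker_iso xy s1 _ _ cHa cGb cGab); first by ring.
  by case: reg_ab => reg; [left; apply: regular_mod2N | right].
- apply: (hom_coker_iso xy s1 _ _ cHb cGa cGab); first by ring.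
  by case: reg_ab => reg; [right | left; apply: regular_mod2N].
- apply: (hom_coker_iso yx sN1 _ _ cGa cHb cHab); first by ring.
  by case: reg_ab => reg; [left; apply: regular_mod2C | right; apply/regular_mod2C/regular_mod2N].
- apply: (hom_coker_iso yx sN1 _ _ cGb cHa cHab); first by ring.
  by case: reg_ab => reg; [right; apply/regular_mod2C/regular_mod2N | left; apply: regular_mod2C].
Qed.
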